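(* Let $\mu$ be any $r$-level Sherali-Adams solution of a $\Delta$-dense Max $k$-CSP instance $\mathcal{G}=(V,\mathcal{W},\{P_S\})$ with alphabet size $q$. Then for every integer $0<l\le r-k$ there exists an integer $0\le t\le l$ such that $$\mathbb{E}_{T\sim V^t,\ \phi_T\sim\mathcal{X}_T}[C(\mu|\phi_T)]\le\frac{k^2\log q}{l\Delta},$$ where $T$ is a uniformly random $t$-tuple of variables (identified with its underlying set) and $\phi_T$ is sampled from the marginal distribution $\mathcal{X}_T$ of $\mu$.
   Context: A Max $k$-CSP instance has finite variable set $V$, alphabet $\Sigma$ with $|\Sigma|=q$, a distribution $\mathcal{W}$ on $V^k$ and predicates $P_S:\Sigma^k\to[0,1]$; it is $\Delta$-dense if $\Delta\cdot\mathcal{W}(S)\le1/|V|^k$ for every $S\in V^k$. An $r$-level Sherali-Adams solution is a collection $\mu=\{\mathcal{X}_S\}$ of distributions $\mathcal{X}_S$ on $\Sigma^S$ for all $S\subseteq V$ with $|S|\le r$ whose marginals agree on intersections. For $|T|\le r-k$ and $\phi_T$ with $\mathcal{X}_T(\phi_T)>0$, the conditioned solution $\mu|\phi_T=\{\tilde{\mathcal{X}}_S\}_{|S|\le r-|T|}$ is given by $\tilde{\mathcal{X}}_S(\phi_S)=\mathcal{X}_{S\cup T}(\phi_S\circ\phi_T)/\mathcal{X}_T(\phi_T)$ if $\phi_S$ agrees with $\phi_T$ on $S\cap T$ and $0$ otherwise. For a tuple $S=(x_{i_1},\dots,x_{i_j})$, $C_\mu(x_S)$ is the total correlation (KL divergence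 of the joint distribution from the product of marginals, natural log) of $(\sigma_{i_1},\dots,\sigma_{i_j})$ jointly sampled from $\mathcal{X}_{\{x_{i_1},\dots,x_{i_j}\}}$, and $C(\mu)=\mathbb{E}_{S\sim\mathcal{W}}[C_\mu(x_S)]$. *)

From HB Require Import structures.
From mathcomp Require Import all_boot all_order all_algebra.
From mathcomp Require Import reals exp.
Set Implicit Arguments. Unset Strict Implicit. Unset Printing Implicit Defensive.
Import Order.TTheory GRing.Theory Num.Theory.
Local Open Scope ring_scope.

Section CSP.
Variables (R : realType) (V Sig : finType).

(* A partial assignment; an assignment phi_S : Sigma^S is represented by the
   partial function with domain exactly S. *)
Definition assign := {ffun V -> option Sig}.
Definition dom (phi : assign) : {set V} := [set x | phi x != None].
Definition restr (U : {set V}) (phi : assign) : assign :=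
  [ffun x => if x \in U then phi x else None].
Definition merge (phiS phiT : assign) : assign :=
  [ffun x => if phiS x is Some a then Some a else phiT x].

Definition SA_solution (r : nat) (X : {set V} -> assign -> R) : Prop :=
  [/\ (forall (S : {set V}) (phi : assign), (#|S| <= r)%N -> 0 <= X S phi),
      (forall (S : {set V}) (phi : assign), (#|S| <= r)%N -> dom phi != S -> X S phi = 0),
      (forall S : {set V}, (#|S| <= r)%N -> \sum_(phi : assign) X S phi = 1) &
      (forall (S S' : {set V}) (psi : assign), (#|S| <= r)%N -> (#|S'| <= r)%N ->
         \sum_(phi : assign | restr (S :&: S') phi == psi) X S phi
         = \sum_(phi : assign | restr (S :&: S') phi == psi) X S' phi)].

Definition condition (X : {set V} -> assign -> R) (T : {set V}) (phiT : assign)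
  : {set V} -> assign -> R :=
  fun S phiS =>
    if (dom phiS == S) && [forall x in S :&: T, phiS x == phiT x]
    then X (S :|: T) (merge phiS phiT) / X T phiT else 0.

Variable k : nat.

Definition jointp (X : {set V} -> assign -> R) (xs : k.-tuple V)
  (s : k.-tuple Sig) : R :=
  \sum_(phi : assign | [forall i, phi (tnth xs i) == Some (tnth s i)])
     X [set x in xs] phi.

Definition margp X xs (i : 'I_k) (a : Sig) : R :=
  \sum_(s : k.-tuple Sig | tnth s i == a) jointp X xs s.

(* total correlation: KL(joint || product of marginals), convention 0 ln 0 = 0 *)
Definition totcorr X xs : R :=
  \sum_(s : k.-tuple Sig | 0 < jointp X xs s)
     jointp X xs s * ln (jointp X xs s / \prod_(i < k) margp X xs i (tnth s i)).

Definition Ccorr (W : k.-tuple V -> R) X : R :=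
  \sum_(S : k.-tuple V) W S * totcorr X S.

Definition expCond (W : k.-tuple V -> R) X (t : nat) : R :=
  (#|V|%:R ^+ t)^-1 *
  \sum_(T : t.-tuple V) \sum_(phi : assign)
     X [set x in T] phi * Ccorr W (condition X [set x in T] phi).

Definition dense (Delta : R) (W : k.-tuple V -> R) : Prop :=
  forall S, Delta * W S <= 1 / (#|V|%:R ^+ k).

End CSP.

(* Let H(A) be the entropy of the local distribution X_A.  Every set that occurs
   has at most r elements, so H obeys the Shannon inequalities: it is monotone and
   submodular, and H(C + a) - H(C) <= ln q, all instances of Gibbs' inequality.
   Averaged over phi_U ~ X_U, the total correlation of x_S under mu | phi_U is
   sum_i (H(U + x_i) - H(U)) - (H(U + S) - H(U)).  Let Gamma_t(m) be its average
   over uniform t-tuples U and m-tuples S, and Phi_t the average marginal gain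
   H(U + a) - H(U), which lies in [0, ln q].  Splitting off the first variable of S
   leaves conditional mutual informations whose average is Phi_t - Phi_(t+1), so
     Gamma_t(m + 1) = Gamma_(t+1)(m) + m (Phi_t - Phi_(t+1)).
   Telescoping in t and induction on m give sum_(t < l) Gamma_t(k) <= k^2 ln q,
   while density bounds the W-average of the correlation by Gamma_t(k) / Delta;
   hence some t < l is at most the mean. *)

From Pilot Require Import Defs.
From HB Require Import structures.
From mathcomp Require Import all_boot all_order all_algebra.
From mathcomp Require Import reals exp.
From mathcomp Require Import ring lra zify.
Import Order.TTheory GRing.Theory Num.Theory.
Local Open Scope ring_scope.
Set Implicit Arguments. Unset Strict Implicit. Unset Printing Implicit Defensive.
Local Notation merge := Defs.merge.

Section Assignments.
Variables (V Sig : finType).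
Local Notation assign := (assign V Sig).
Implicit Types (phi psi chi : assign) (A B C U : {set V}).

Lemma in_dom phi x : (x \in dom phi) = (phi x != None).
Proof. by rewrite inE. Qed.

Lemma notin_dom phi x : x \notin dom phi -> phi x = None.
Proof. by rewrite in_dom negbK => /eqP. Qed.

Lemma restrE B phi x : restr B phi x = if x \in B then phi x else None.
Proof. by rewrite ffunE. Qed.

Lemma mergeE psi phi x :
  merge psi phi x = if psi x is Some a then Some a else phi x.
Proof. by rewrite ffunE. Qed.

Lemma dom_restr A chi : dom (restr A chi) = A :&: dom chi.
Proof. by apply/setP=> x; rewrite !inE restrE; case: (x \in A). Qed.

Lemma dom_merge psi phi : dom (merge psi phi) = dom psi :|: dom phi.
Proof. by apply/setP=> x; rewrite !inE mergeE; case: (psi x). Qed.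

Lemma eq_assign B phi psi :
  dom phi = B -> dom psi = B -> {in B, phi =1 psi} -> phi = psi.
Proof.
move=> dphi dpsi eqB; apply/ffunP=> x.
have [/eqB //|xNB] := boolP (x \in B).
by rewrite !notin_dom ?dphi ?dpsi.
Qed.

Lemma restr_id B phi : dom phi = B -> restr B phi = phi.
Proof. by move=> <-; apply/ffunP=> x; rewrite restrE in_dom; case: (phi x). Qed.

Lemma restr_restr B C phi : C \subset B -> restr C (restr B phi) = restr C phi.
Proof.
by move=> sCB; apply/ffunP=> x; rewrite !restrE; case: ifP => // /(subsetP sCB)->.
Qed.

Lemma restr_mergel A psi phi : dom psi = A -> restr A (merge psi phi) = psi.
Proof.
move=> dpsi; apply/ffunP=> x; rewrite restrE mergeE -dpsi in_dom.
by case: (psi x).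
Qed.

Lemma restr_merger A U psi phi : dom psi = A -> dom phi = U ->
  [forall x in A :&: U, psi x == phi x] -> restr U (merge psi phi) = phi.
Proof.
move=> dpsi dphi /forallP agree; apply/ffunP=> x; rewrite restrE mergeE.
case: ifP => xU; last first.
  by rewrite (notin_dom (phi := phi)) ?dphi ?xU //; case: (psi x).
case psix: (psi x) => [a|] //; have xA : x \in A by rewrite -dpsi in_dom psix.
by have := agree x; rewrite inE xA xU psix => /eqP.
Qed.

Lemma merge_restr A U chi phi :
  dom chi = A :|: U -> restr U chi = phi -> merge (restr A chi) phi = chi.
Proof.
move=> dchi <-; apply/ffunP=> x; rewrite mergeE !restrE.
case: ifP => xA; first by case: (chi x); rewrite ?if_same.
case: ifP => xU //; by rewrite notin_dom // dchi inE xA xU.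
Qed.

Lemma merge_consistent A U psi phi : dom phi = U ->
  [&& dom (merge psi phi) == A :|: U, restr U (merge psi phi) == phi
    & restr A (merge psi phi) == psi]
  = (dom psi == A) && [forall x in A :&: U, psi x == phi x].
Proof.
move=> dphi; apply/and3P/andP => [[/eqP dm /eqP rU /eqP rA]|[/eqP dpsi agree]].
  have dpsi : dom psi = A by rewrite -rA dom_restr dm; apply/setIidPl/subsetUl.
  split; first by rewrite dpsi.
  apply/forallP=> x; apply/implyP=> /setIP[xA xU].
  have := congr1 (fun chi => chi x) rA; have := congr1 (fun chi => chi x) rU.
  by rewrite /= !restrE xA xU => -> ->.
rewrite dom_merge dpsi dphi (restr_merger dpsi dphi agree).
by rewrite restr_mergel // !eqxx.
Qed.

Lemma exists_values_tuple k (xs : k.-tuple V) chi :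
  (forall j, chi (tnth xs j) != None) ->
  exists s0 : k.-tuple Sig, forall s,
    [forall j, chi (tnth xs j) == Some (tnth s j)] = (s == s0).
Proof.
move=> defined.
have /fin_all_exists[f chi_f] : forall j, exists a, chi (tnth xs j) = Some a.
  by move=> j; move: (defined j); case: (chi (tnth xs j)) => [a|] // _; exists a.
exists [tuple f j | j < k] => s; apply/forallP/eqP => [s_vals|->] /=.
  apply: eq_from_tnth => j; rewrite tnth_mktuple.
  by move: (s_vals j); rewrite chi_f => /eqP [].
by move=> j; rewrite tnth_mktuple chi_f.
Qed.

End Assignments.

Section SheraliAdams.
Variables (R : realType) (V Sig : finType) (r : nat).
Variable X : {set V} -> assign V Sig -> R.
Hypothesis HX : SA_solution r X.
Implicit Types (phi psi : assign V Sig) (A B S : {set V}).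

Lemma SA_ge0 S phi : (#|S| <= r)%N -> 0 <= X S phi.
Proof. by case: HX => + _ _ _; apply. Qed.

Lemma SA_dom S phi : (#|S| <= r)%N -> X S phi != 0 -> dom phi = S.
Proof. by case: HX => _ dom_X _ _ hS; apply: contraNeq => /(dom_X S phi hS) ->. Qed.

Lemma SA_sum1 S : (#|S| <= r)%N -> \sum_phi X S phi = 1.
Proof. by case: HX => _ _ + _; apply. Qed.

Lemma SA_marginal B A psi : B \subset A -> (#|A| <= r)%N ->
  \sum_(phi | restr B phi == psi) X A phi = X B psi.
Proof.
move=> sBA hA; have hB := leq_trans (subset_leq_card sBA) hA.
case: HX => _ _ _ /(_ A B psi hA hB); rewrite (setIidPr sBA) => ->.
rewrite big_mkcond (bigD1 psi) //= big1 ?addr0 => [|phi phi_psi]; last first.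
  have [->|/(SA_dom hB) dphi] := eqVneq (X B phi) 0; first by rewrite if_same.
  by rewrite restr_id // (negPf phi_psi).
case: eqP => // /eqP restr_psi; apply/esym/eqP; apply: contraNT restr_psi.
by move/(SA_dom hB)/restr_id ->.
Qed.

Lemma SA_marginal_pred B A (P : pred (assign V Sig)) :
  B \subset A -> (#|A| <= r)%N ->
  \sum_(phi | P (restr B phi)) X A phi = \sum_(psi | P psi) X B psi.
Proof.
move=> sBA hA; rewrite (partition_big (restr B) P) //=.
apply: eq_bigr => psi Ppsi.
rewrite -(SA_marginal psi sBA hA); apply: eq_bigl => phi.
by apply: andb_idl => /eqP ->.
Qed.

Lemma SA_sum_restr B A (G : assign V Sig -> R) : B \subset A -> (#|A| <= r)%N ->
  \sum_phi X A phi * G (restr B phi) = \sum_psi X B psi * G psi.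
Proof.
move=> sBA hA; rewrite (partition_big (restr B) predT) //=.
apply: eq_bigr => psi _.
by rewrite -(SA_marginal psi sBA hA) mulr_suml; apply: eq_bigr => phi /eqP ->.
Qed.

Lemma SA_le_marginal B A phi : B \subset A -> (#|A| <= r)%N ->
  X A phi <= X B (restr B phi).
Proof.
move=> sBA hA; rewrite -(SA_marginal _ sBA hA) (bigD1 phi) //= lerDl.
by apply: sumr_ge0 => psi _; apply: SA_ge0.
Qed.

End SheraliAdams.

Section BigSums.
Variable R : realType.

Lemma fun_sum_supp1 (I : finType) (P : pred I) (f : I -> R) (F : R -> R) :
  F 0 = 0 -> {in P &, forall i j, f i != 0 -> f j != 0 -> i = j} ->
  F (\sum_(i | P i) f i) = \sum_(i | P i) F (f i).
Proof.
move=> F0 supp1.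
have [i0 /andP[Pi0 fi0]|f0] := pickP (fun i => P i && (f i != 0)); last first.
  have {}f0 i : P i -> f i = 0.
    by move=> Pi; apply/eqP; have := f0 i; rewrite Pi => /negbFE.
  by rewrite big1 // F0 big1 // => i /f0 ->.
have fj0 j : P j && (j != i0) -> f j = 0.
  by case/andP=> Pj; apply: contraNeq => fj; apply/eqP; apply: supp1.
rewrite (bigD1 i0) // [RHS](bigD1 i0) //= big1 // addr0.
by rewrite big1 ?addr0 // => j /fj0 ->.
Qed.

Lemma sum_fun_fibres (T I : finType) (E : I -> pred T) (f : T -> R) (F : R -> R) :
  F 0 = 0 ->
  (forall i, {in E i &, forall t t', f t != 0 -> f t' != 0 -> t = t'}) ->
  (forall t, f t != 0 -> exists i0, forall i, E i t = (i == i0)) ->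
  \sum_i F (\sum_(t | E i t) f t) = \sum_t F (f t).
Proof.
move=> F0 fibre1 cover.
under eq_bigr => i _ do rewrite (fun_sum_supp1 F0 (fibre1 i)).
rewrite (exchange_big_dep xpredT) //=; apply: eq_bigr => t _.
have [->|/cover[i0 Ei0]] := eqVneq (f t) 0; first by rewrite F0 big1.
by rewrite (eq_bigl (pred1 i0)) ?big_pred1_eq // => i; rewrite Ei0.
Qed.

Lemma ler_sum_inj (I J : finType) (P : pred I) (Q : pred J) (g : I -> J)
    (F : J -> R) :
  {in P &, injective g} -> {in P, forall i, Q (g i)} ->
  (forall j, Q j -> 0 <= F j) ->
  \sum_(i | P i) F (g i) <= \sum_(j | Q j) F j.
Proof.
move=> g_inj PQ F_ge0; rewrite -(big_imset _ g_inj) /=.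
rewrite [leRHS]big_mkcond [leLHS]big_mkcond /=; apply: ler_sum => j _.
case: ifP => [/imsetP[i Pi ->]|_]; first by rewrite PQ.
by case: ifP => // /F_ge0.
Qed.

End BigSums.

Section Xlnx.
Variable R : realType.

Definition xlnx (x : R) := x * ln x.

Lemma xlnx0 : xlnx 0 = 0.
Proof. by rewrite /xlnx mul0r. Qed.

Lemma ln_le_subr1 (x : R) : 0 < x -> ln x <= x - 1.
Proof.
move=> x_gt0; have := @le_ln1Dx R (x - 1).
by rewrite addrCA subrr addr0; apply; lra.
Qed.

Lemma ln_nat_ge0 m : 0 <= ln (m%:R : R).
Proof. by case: m => [|m]; [rewrite ln0 | rewrite ln_ge0 // ler1n]. Qed.

Lemma ln_prod (I : finType) (P : pred I) (f : I -> R) :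
  (forall i, P i -> 0 < f i) ->
  ln (\prod_(i | P i) f i) = \sum_(i | P i) ln (f i).
Proof.
move=> f_gt0; apply: expR_inj; rewrite expR_sum lnK ?posrE ?prodr_gt0 //.
by apply: eq_bigr => i Pi; rewrite lnK ?posrE ?f_gt0.
Qed.

Lemma gibbs_ineq (I : finType) (p q : I -> R) :
  (forall i, 0 <= p i) -> \sum_i p i = 1 ->
  (forall i, 0 < p i -> 0 < q i) -> \sum_(i | 0 < p i) q i <= 1 ->
  \sum_i p i * ln (q i) <= \sum_i xlnx (p i).
Proof.
move=> p_ge0 p_sum1 q_gt0 q_sum_le1.
have term i : p i * ln (q i) - xlnx (p i) <= (if 0 < p i then q i else 0) - p i.
  have [pi_gt0|pi_le0] := ltP 0 (p i); last first.
    have -> : p i = 0 by apply/le_anti; rewrite pi_le0 p_ge0.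
    by rewrite /xlnx !mul0r subrr.
  have := ler_wpM2l (ltW pi_gt0) (ln_le_subr1 (divr_gt0 (q_gt0 i pi_gt0) pi_gt0)).
  rewrite ln_div ?posrE ?q_gt0 // mulrBr mulrBr mulr1 mulrCA divff ?gt_eqF //.
  by rewrite mulr1 /xlnx.
rewrite -subr_le0 -sumrB; apply: le_trans (ler_sum _ (fun i _ => term i)) _.
by rewrite sumrB -big_mkcond /= p_sum1 subr_le0.
Qed.

Lemma sum_xlnxM (I : finType) (c : R) (p : I -> R) :
  0 < c -> (forall i, 0 <= p i) -> \sum_i p i = 1 ->
  \sum_i xlnx (c * p i) = c * \sum_i xlnx (p i) + xlnx c.
Proof.
move=> c_gt0 p_ge0 p_sum1.
have term i : xlnx (c * p i) = c * xlnx (p i) + p i * xlnx c.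
  have [->|pi_neq0] := eqVneq (p i) 0.
    by rewrite /xlnx !(mulr0, mul0r) addr0.
  have pi_gt0 : 0 < p i by rewrite lt0r pi_neq0 p_ge0.
  by rewrite /xlnx lnM ?posrE //; ring.
rewrite (eq_bigr _ (fun i _ => term i)) big_split /=.
by rewrite -mulr_sumr -mulr_suml p_sum1 mul1r.
Qed.

End Xlnx.

Section Entropy.
Variables (R : realType) (V Sig : finType) (r : nat).
Variable X : {set V} -> assign V Sig -> R.
Hypothesis HX : SA_solution r X.
Implicit Types (phi psi : assign V Sig) (A B C : {set V}).

Definition entropy A : R := - \sum_phi xlnx (X A phi).

Lemma entropy_sum_restr B A : B \subset A -> (#|A| <= r)%N ->
  entropy B = - \sum_phi X A phi * ln (X B (restr B phi)).
Proof.
by move=> sBA hA; rewrite (SA_sum_restr HX (fun psi => ln (X B psi)) sBA hA).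
Qed.

Lemma entropy_set0 : entropy set0 = 0.
Proof.
have h0 : (#|@set0 V| <= r)%N by rewrite cards0.
rewrite /entropy -(@fun_sum_supp1 _ _ xpredT (X set0) (@xlnx R)) ?xlnx0 //.
  by rewrite (SA_sum1 HX) // /xlnx ln1 mulr0 oppr0.
move=> phi psi _ _ /(SA_dom HX h0) dphi /(SA_dom HX h0) dpsi.
by apply: (eq_assign dphi dpsi) => x; rewrite inE.
Qed.

Lemma entropy_set1_le a : (1 <= r)%N -> entropy [set a] <= ln #|Sig|%:R.
Proof.
move=> r_gt0; have ha : (#|[set a]| <= r)%N by rewrite cards1.
set p := X [set a]; set q : R := #|Sig|%:R.
have p_ge0 phi : 0 <= p phi := SA_ge0 HX phi ha.
have dom_p phi : 0 < p phi -> dom phi = [set a] by move/lt0r_neq0/(SA_dom HX ha).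
have [phi0 /andP[_ /dom_p dphi0]] : exists phi, true && (0 < p phi).
  apply: psumr_neq0P => //; rewrite (SA_sum1 HX ha).
  by apply/eqP; rewrite oner_eq0.
have q_gt0 : 0 < q.
  have : a \in dom phi0 by rewrite dphi0 set11.
  by rewrite in_dom ltr0n; case: (phi0 a) => // s _; apply/card_gt0P; exists s.
have := @gibbs_ineq _ _ p (fun=> q^-1) p_ge0 (SA_sum1 HX ha).
rewrite -mulr_suml (SA_sum1 HX) // mul1r lnV ?posrE // -lerNl => -> //.
  by move=> phi _; rewrite invr_gt0.
apply: le_trans (ler_sum_inj (F := fun=> q^-1) (g := fun phi => phi a)
  (Q := fun o => o != None) _ _ _) _.
- move=> phi psi /dom_p dphi /dom_p dpsi /= eq_a.
  by apply: (eq_assign dphi dpsi) => x; rewrite inE => /eqP ->.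
- by move=> phi /dom_p dphi; rewrite /= -in_dom dphi set11.
- by move=> _ _; rewrite invr_ge0 ltW.
rewrite (eq_bigl (mem (predC1 None))) // sumr_const cardC1 card_option /=.
by rewrite -mulr_natr mulVf ?gt_eqF.
Qed.

(* The summand is the coupling of X_A1 and X_A2 that is conditionally independent
   over C; submodularity is Gibbs' inequality against it. *)
Lemma sum_glued_le1 A1 A2 C :
  C \subset A1 -> C \subset A2 -> (#|A1 :|: A2| <= r)%N ->
  \sum_(phi | 0 < X (A1 :|: A2) phi)
    X A1 (restr A1 phi) * X A2 (restr A2 phi) / X C (restr C phi) <= 1.
Proof.
move=> sCA1 sCA2 hA; set A := A1 :|: A2.
have hA1 := leq_trans (subset_leq_card (subsetUl A1 A2)) hA.
have hA2 := leq_trans (subset_leq_card (subsetUr A1 A2)) hA.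
have hC := leq_trans (subset_leq_card sCA1) hA1.
pose F (psi : assign V Sig * assign V Sig) :=
  X A1 psi.1 * X A2 psi.2 / X C (restr C psi.1).
rewrite (eq_bigr (fun phi => F (restr A1 phi, restr A2 phi))); last first.
  by move=> phi _; rewrite /F /= restr_restr.
apply: le_trans (ler_sum_inj (F := F)
  (Q := fun psi : assign V Sig * assign V Sig => restr C psi.2 == restr C psi.1)
  (g := fun phi => (restr A1 phi, restr A2 phi)) _ _ _) _.
- move=> phi phi' /lt0r_neq0/(SA_dom HX hA) dphi /lt0r_neq0/(SA_dom HX hA) dphi'.
  case=> eq1 eq2; apply: (eq_assign dphi dphi') => x; rewrite inE.
  case/orP=> [xA1|xA2].
    by have := congr1 (fun psi => psi x) eq1; rewrite !restrE xA1.
  by have := congr1 (fun psi => psi x) eq2; rewrite !restrE xA2.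
- by move=> phi _; rewrite /= !restr_restr.
- by move=> psi _; rewrite /F !(divr_ge0, mulr_ge0) // (SA_ge0 HX).
rewrite -(pair_big_dep xpredT (fun psi1 psi2 => restr C psi2 == restr C psi1)
  (fun psi1 psi2 => F (psi1, psi2))) /= -(SA_sum1 HX hA1).
apply: ler_sum => psi1 _; rewrite /F /=.
under eq_bigr => psi2 _ do rewrite mulrAC.
rewrite -mulr_sumr (SA_marginal HX _ sCA2 hA2).
have [->|XC_neq0] := eqVneq (X C (restr C psi1)) 0.
  by rewrite mulr0 (SA_ge0 HX).
by rewrite divfK.
Qed.

Lemma entropy_submod A1 A2 C :
  C \subset A1 -> C \subset A2 -> (#|A1 :|: A2| <= r)%N ->
  entropy (A1 :|: A2) + entropy C <= entropy A1 + entropy A2.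
Proof.
move=> sCA1 sCA2 hA; set A := A1 :|: A2.
have sA1A : A1 \subset A := subsetUl _ _.
have sA2A : A2 \subset A := subsetUr _ _.
have sCA := subset_trans sCA1 sA1A.
rewrite (entropy_sum_restr sA1A hA) (entropy_sum_restr sA2A hA).
rewrite (entropy_sum_restr sCA hA) /entropy.
set p := X A; pose m B phi := X B (restr B phi).
have p_ge0 phi : 0 <= p phi := SA_ge0 HX phi hA.
have m_gt0 B phi : B \subset A -> 0 < p phi -> 0 < m B phi.
  by move=> sBA p_gt0; apply: lt_le_trans p_gt0 (SA_le_marginal HX phi sBA hA).
have ln_split phi : p phi * ln (m A1 phi * m A2 phi / m C phi) =
    p phi * ln (m A1 phi) + p phi * ln (m A2 phi) - p phi * ln (m C phi).
  have [p0|pN0] := eqVneq (p phi) 0; first by rewrite p0 !mul0r addr0 subr0.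
  have p_gt0 : 0 < p phi by rewrite lt0r pN0 p_ge0.
  by rewrite ln_div ?lnM ?posrE ?mulr_gt0 ?m_gt0 // -mulrDr -mulrBr.
have q_gt0 phi : 0 < p phi -> 0 < m A1 phi * m A2 phi / m C phi.
  by move=> p_gt0; rewrite divr_gt0 ?mulr_gt0 ?m_gt0.
have := gibbs_ineq p_ge0 (SA_sum1 HX hA) q_gt0 (sum_glued_le1 sCA1 sCA2 hA).
rewrite (eq_bigr _ (fun phi _ => ln_split phi)) sumrB big_split /= /m.
lra.
Qed.

Lemma entropy_mono B A : B \subset A -> (#|A| <= r)%N -> entropy B <= entropy A.
Proof.
by move=> sBA hA; have := entropy_submod sBA sBA; rewrite setUid lerD2l; apply.
Qed.

Lemma entropy_setU1_le C a : (#|C :|: [set a]| <= r)%N ->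
  entropy (C :|: [set a]) - entropy C <= ln #|Sig|%:R.
Proof.
move=> hCa; have := entropy_submod (sub0set C) (sub0set [set a]) hCa.
have r_gt0 : (0 < r)%N.
  apply: leq_trans hCa; rewrite card_gt0; apply/set0Pn.
  by exists a; rewrite !inE eqxx orbT.
have := entropy_set1_le a r_gt0; rewrite entropy_set0; lra.
Qed.

End Entropy.

Section SetFunctions.
Variables (R : realType) (V : finType) (H : {set V} -> R).
Local Notation n := (#|V|%:R : R).
Implicit Types (C : {set V}) (a b x y : V).

Definition cond_corr (C : {set V}) (s : seq V) : R :=
  \sum_(y <- s) (H (C :|: [set y]) - H C) - (H ([set x in s] :|: C) - H C).

Definition cond_mutinf a b C : R :=
  H (C :|: [set a]) + H (C :|: [set b]) - H (C :|: [set a] :|: [set b]) - H C.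

Definition gain C : R := \sum_a (H (C :|: [set a]) - H C).

Lemma cond_corr_nil C : cond_corr C [::] = 0.
Proof.
by rewrite /cond_corr big_nil (_ : [set x in [::]] = set0) ?set0U ?subrr.
Qed.

Lemma cond_corr_cons C x s : cond_corr C (x :: s) =
  cond_corr (C :|: [set x]) s + \sum_(y <- s) cond_mutinf x y C.
Proof.
rewrite /cond_corr big_cons.
have -> : [set z in x :: s] :|: C = [set z in s] :|: (C :|: [set x]).
  apply/setP => z; rewrite !inE.
  by case: (z == x); case: (z \in s); case: (z \in C).
have : \sum_(y <- s) (H (C :|: [set y]) - H C) =
    \sum_(y <- s) (H (C :|: [set x] :|: [set y]) - H (C :|: [set x])) +
    \sum_(y <- s) cond_mutinf x y C.
  by rewrite -big_split; apply: eq_bigr => y _; rewrite /cond_mutinf /=; ring.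
lra.
Qed.

Lemma sum_tuple_cons m (F : seq V -> R) :
  \sum_(t : m.+1.-tuple V) F t = \sum_x \sum_(t : m.-tuple V) F (x :: t).
Proof.
rewrite pair_big /=.
rewrite (reindex (fun p : V * m.-tuple V => [tuple of p.1 :: p.2])) //=.
exists (fun t : m.+1.-tuple V => (thead t, [tuple of behead t])).
  by move=> [x t] _ /=; rewrite theadE; congr pair; apply: val_inj.
by move=> t _; rewrite [RHS]tuple_eta.
Qed.

Lemma sum_tuple_const m (c : R) : \sum_(t : m.-tuple V) c = n ^+ m * c.
Proof. by rewrite sumr_const card_tuple -[c *+ _]mulr_natr natrX mulrC. Qed.

Lemma sum_tuple_mem m (f : V -> R) :
  \sum_(t : m.-tuple V) \sum_(y <- t) f y = m%:R * n ^+ m.-1 * \sum_b f b.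
Proof.
elim: m => [|m IHm].
  by rewrite big1 ?mul0r // => t _; rewrite tuple0 big_nil.
rewrite (sum_tuple_cons m (fun s => \sum_(y <- s) f y)) /=.
under eq_bigr do rewrite (eq_bigr _ (fun t _ => big_cons _ _ _ _ _ _))
  big_split /= sum_tuple_const IHm.
rewrite big_split /= -mulr_sumr sumr_const -mulr_natr.
by case: m {IHm} => [|m] /=; [ring | rewrite exprS; ring].
Qed.

Definition sum_tsets m (f : {set V} -> R) : R :=
  \sum_(T : m.-tuple V) f [set x in T].

Lemma sum_tsetsS m f :
  sum_tsets m.+1 f = sum_tsets m (fun C => \sum_x f (C :|: [set x])).
Proof.
rewrite /sum_tsets (sum_tuple_cons m (fun s => f [set x in s])) exchange_big /=.
apply: eq_bigr => t _; apply: eq_bigr => x _; congr f.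
by apply/setP => z; rewrite !inE orbC.
Qed.

Lemma card_tset m (T : m.-tuple V) : (#|[set x in T]| <= m)%N.
Proof. by rewrite cardsE (leq_trans (card_size _)) // size_tuple. Qed.

Lemma sum_cond_mutinf C :
  \sum_a \sum_b cond_mutinf a b C = n * gain C - \sum_b gain (C :|: [set b]).
Proof.
have -> : n * gain C = \sum_(b : V) gain C by rewrite sumr_const mulr_natl.
rewrite exchange_big -sumrB; apply: eq_bigr => b _; rewrite /gain -sumrB.
by apply: eq_bigr => a _; rewrite /cond_mutinf setUAC; ring.
Qed.

Definition corr_sum m C : R := \sum_(S : m.-tuple V) cond_corr C S.

Lemma corr_sum0 C : corr_sum 0 C = 0.
Proof. by rewrite /corr_sum big1 // => t _; rewrite tuple0 cond_corr_nil. Qed.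

Lemma corr_sumS m C : corr_sum m.+1 C = \sum_x corr_sum m (C :|: [set x])
  + m%:R * n ^+ m.-1 * (n * gain C - \sum_b gain (C :|: [set b])).
Proof.
rewrite /corr_sum (sum_tuple_cons m (cond_corr C)) -sum_cond_mutinf.
rewrite mulr_sumr -big_split; apply: eq_bigr => x _.
rewrite -(sum_tuple_mem m (fun y => cond_mutinf x y C)) -big_split.
by apply: eq_bigr => t _; rewrite cond_corr_cons.
Qed.

Lemma sum_tsets_corr_sumS s m :
  sum_tsets s (corr_sum m.+1) = sum_tsets s.+1 (corr_sum m)
    + m%:R * n ^+ m.-1 * (n * sum_tsets s gain - sum_tsets s.+1 gain).
Proof.
rewrite !sum_tsetsS /sum_tsets [n * _]mulr_sumr -sumrB mulr_sumr -big_split /=.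
by apply: eq_bigr => T _; rewrite corr_sumS.
Qed.

Definition avg_gain s : R := sum_tsets s gain / n ^+ s.+1.

Definition avg_corr s m : R := sum_tsets s (corr_sum m) / n ^+ (s + m).

Lemma avg_corr0 s : avg_corr s 0 = 0.
Proof.
by rewrite /avg_corr /sum_tsets big1 ?mul0r // => T _; rewrite corr_sum0.
Qed.

Hypothesis V_gt0 : (0 < #|V|)%N.

Lemma avg_corrS s m :
  avg_corr s m.+1 = avg_corr s.+1 m + m%:R * (avg_gain s - avg_gain s.+1).
Proof.
have n_neq0 : n != 0 by rewrite pnatr_eq0 -lt0n.
rewrite /avg_corr /avg_gain sum_tsets_corr_sumS.
case: m => [|m]; first by rewrite !mul0r !addr0 addn1 addn0.
have ns_neq0 : n ^+ s != 0 := expf_neq0 _ n_neq0.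
have nm_neq0 : n ^+ m != 0 := expf_neq0 _ n_neq0.
rewrite addSn !addnS !exprS exprD /=.
by field; rewrite n_neq0 ns_neq0 nm_neq0.
Qed.

End SetFunctions.

Section Conditioning.
Variables (R : realType) (V Sig : finType) (r : nat).
Variable X : {set V} -> assign V Sig -> R.
Hypothesis HX : SA_solution r X.
Variables (A U : {set V}).
Hypothesis hAU : (#|A :|: U| <= r)%N.
Implicit Types (phi psi chi : assign V Sig).

Lemma SA_condition_sum phi (G : assign V Sig -> R) : X U phi != 0 ->
  X U phi * \sum_psi condition X U phi A psi * G psi
  = \sum_(chi | restr U chi == phi) X (A :|: U) chi * G (restr A chi).
Proof.
move=> XU_neq0; have hU := leq_trans (subset_leq_card (subsetUr A U)) hAU.
have dphi := SA_dom HX hU XU_neq0.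
rewrite mulr_sumr (eq_bigr (fun psi =>
  if (dom psi == A) && [forall x in A :&: U, psi x == phi x]
  then X (A :|: U) (merge psi phi) * G psi else 0)); last first.
  move=> psi _; rewrite /condition; case: ifP => _; last by rewrite mul0r mulr0.
  by rewrite mulrA mulrCA divff // mulr1.
rewrite -big_mkcond /= [RHS](bigID (fun chi => dom chi == A :|: U)) /=.
rewrite [Z in _ + Z]big1 ?addr0 => [|chi /andP[_ dchi]]; last first.
  rewrite (_ : X _ chi = 0) ?mul0r //.
  by apply: contraNeq dchi => /(SA_dom HX hAU) ->.
(* psi |-> merge psi phi is a bijection onto the assignments of A :|: U that
   extend phi. *)
rewrite [RHS](reindex_onto (fun psi => merge psi phi) (restr A)) /=; last first.
  by move=> chi /andP[/eqP rU /eqP dchi]; exact: merge_restr dchi rU.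
apply: eq_big => psi.
  by rewrite -merge_consistent // -[RHS]andbA [RHS]andbCA.
by case/andP=> /eqP dpsi _; rewrite restr_mergel.
Qed.

End Conditioning.

Section TotalCorrelation.
Variables (R : realType) (V Sig : finType) (k : nat).
Variables (Y : {set V} -> assign V Sig -> R) (xs : k.-tuple V).
Local Notation J := (jointp Y xs).
Local Notation M := (margp Y xs).
Hypothesis J_ge0 : forall s, 0 <= J s.

Lemma sum_margp_tnth i (G : Sig -> R) :
  \sum_s J s * G (tnth s i) = \sum_a M i a * G a.
Proof.
rewrite (partition_big (fun s => tnth s i) xpredT) //=; apply: eq_bigr => a _.
by rewrite /margp mulr_suml; apply: eq_bigr => s /eqP ->.
Qed.

Lemma jointp_le_margp s i : J s <= M i (tnth s i).
Proof. by rewrite /margp (bigD1 s) //= lerDl sumr_ge0. Qed.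

Lemma totcorrE : totcorr Y xs = \sum_s xlnx (J s) - \sum_i \sum_a xlnx (M i a).
Proof.
rewrite /totcorr big_mkcond /= (eq_bigr (fun s =>
  xlnx (J s) - \sum_i J s * ln (M i (tnth s i)))) => [|s _]; last first.
  case: ifPn => [J_gt0|]; last first.
    rewrite -leNgt => J_le0.
    have -> : J s = 0 by apply/le_anti; rewrite J_le0 J_ge0.
    by rewrite xlnx0 big1 ?subr0 // => i _; rewrite mul0r.
  have M_gt0 i : 0 < M i (tnth s i) := lt_le_trans J_gt0 (jointp_le_margp s i).
  by rewrite ln_div ?posrE ?prodr_gt0 // ln_prod // mulrBr mulr_sumr.
rewrite sumrB exchange_big /=; congr (_ - _); apply: eq_bigr => i _.
exact: sum_margp_tnth.
Qed.

End TotalCorrelation.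

Section ConditionedTotalCorrelation.
Variables (R : realType) (V Sig : finType) (r k : nat).
Variable X : {set V} -> assign V Sig -> R.
Hypothesis HX : SA_solution r X.
Variables (xs : k.-tuple V) (U : {set V}).
Local Notation A := [set x in xs].
Hypothesis hAU : (#|A :|: U| <= r)%N.
Implicit Types (phi psi chi : assign V Sig) (s : k.-tuple Sig).

Let hU : (#|U| <= r)%N.
Proof. exact: leq_trans (subset_leq_card (subsetUr _ _)) hAU. Qed.

Let XAU_ge0 chi : 0 <= X (A :|: U) chi.
Proof. exact: (SA_ge0 HX chi hAU). Qed.

Lemma mem_tset j : tnth xs j \in A.
Proof. by rewrite inE mem_tnth. Qed.

Lemma support_defined chi :
  X (A :|: U) chi != 0 -> forall j, chi (tnth xs j) != None.
Proof. by move=> /(SA_dom HX hAU) dchi j; rewrite -in_dom dchi inE mem_tset. Qed.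

Definition joint_mass phi s := \sum_(chi | (restr U chi == phi) &&
  [forall j, chi (tnth xs j) == Some (tnth s j)]) X (A :|: U) chi.

Lemma joint_mass_ge0 phi s : 0 <= joint_mass phi s.
Proof. by apply: sumr_ge0 => chi _; exact: XAU_ge0. Qed.

Lemma joint_mass_le phi s : joint_mass phi s <= X U phi.
Proof.
rewrite -(SA_marginal HX phi (subsetUr A U) hAU) /joint_mass.
rewrite [leRHS](bigID (fun chi => [forall j, chi (tnth xs j) == Some (tnth s j)])).
rewrite /= lerDl.
by apply: sumr_ge0 => chi _; exact: XAU_ge0.
Qed.

Lemma sum_joint_mass phi : \sum_s joint_mass phi s = X U phi.
Proof.
rewrite /joint_mass (exchange_big_dep xpredT) //=.
rewrite -(SA_marginal HX phi (subsetUr A U) hAU) [RHS]big_mkcond.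
apply: eq_bigr => chi _.
case: (restr U chi == phi) => /=; last by rewrite big_pred0_eq.
have [->|/support_defined/exists_values_tuple[s0 vals_s0]] :=
  eqVneq (X (A :|: U) chi) 0; first by rewrite big1.
by rewrite (eq_bigl (pred1 s0)) ?big_pred1_eq // => s; rewrite /= vals_s0.
Qed.

Lemma cond_jointp phi s :
  X U phi * jointp (condition X U phi) xs s = joint_mass phi s.
Proof.
have [XU0|XU_neq0] := eqVneq (X U phi) 0.
  have := joint_mass_le phi s; rewrite XU0 mul0r => jm_le0.
  by apply/esym/le_anti; rewrite jm_le0 joint_mass_ge0.
rewrite /jointp big_mkcond /= (eq_bigr (fun psi => condition X U phi A psi *
  [forall j, psi (tnth xs j) == Some (tnth s j)]%:R)) => [|psi _]; last first.
  by case: ifP; rewrite ?mulr1 ?mulr0.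
rewrite (SA_condition_sum HX hAU) // /joint_mass big_mkcondr /=.
apply: eq_bigr => chi _.
have -> : [forall j, restr A chi (tnth xs j) == Some (tnth s j)] =
    [forall j, chi (tnth xs j) == Some (tnth s j)].
  by apply: eq_forallb => j; rewrite restrE mem_tset.
by case: [forall j, _]; rewrite ?mulr1 ?mulr0.
Qed.

Lemma cond_totcorr phi : X U phi * totcorr (condition X U phi) xs =
  (\sum_s xlnx (joint_mass phi s) - xlnx (X U phi))
  - \sum_i (\sum_a xlnx (\sum_(s | tnth s i == a) joint_mass phi s)
             - xlnx (X U phi)).
Proof.
have [XU0|XU_neq0] := eqVneq (X U phi) 0.
  have jm0 s : joint_mass phi s = 0 by rewrite -cond_jointp XU0 mul0r.
  rewrite XU0 mul0r xlnx0 big1 => [|s _]; last by rewrite jm0 xlnx0.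
  rewrite big1 => [|i _]; first by rewrite !subr0.
  by rewrite subr0 big1 // => a _; rewrite big1 ?xlnx0 // => s _; rewrite jm0.
have x_gt0 : 0 < X U phi by rewrite lt0r XU_neq0 (SA_ge0 HX _ hU).
set Y := condition X U phi.
have jmE s : joint_mass phi s = X U phi * jointp Y xs s by rewrite cond_jointp.
have mmE i a :
    \sum_(s | tnth s i == a) joint_mass phi s = X U phi * margp Y xs i a.
  by rewrite /margp mulr_sumr; apply: eq_bigr => s _; rewrite jmE.
have J_ge0 s : 0 <= jointp Y xs s.
  by rewrite -(pmulr_rge0 _ x_gt0) -jmE joint_mass_ge0.
have J_sum1 : \sum_s jointp Y xs s = 1.
  apply: (mulfI XU_neq0); rewrite mulr_sumr mulr1 -[RHS]sum_joint_mass.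
  by apply: eq_bigr => s _; rewrite jmE.
have M_ge0 i a : 0 <= margp Y xs i a by apply: sumr_ge0.
have M_sum1 i : \sum_a margp Y xs i a = 1.
  by rewrite -J_sum1 [RHS](partition_big (fun s => tnth s i) xpredT).
under eq_bigr do rewrite jmE.
under [Z in _ - Z]eq_bigr => i _ do under eq_bigr do rewrite mmE.
rewrite sum_xlnxM // addrK.
under eq_bigr => i _ do rewrite (sum_xlnxM x_gt0 (M_ge0 i) (M_sum1 i)) addrK.
by rewrite (totcorrE J_ge0) mulrBr [Z in _ - Z = _]mulr_sumr.
Qed.

Lemma marg_mass i phi a : \sum_(s | tnth s i == a) joint_mass phi s =
  \sum_(psi | (restr U psi == phi) && (psi (tnth xs i) == Some a))
    X (U :|: [set tnth xs i]) psi.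
Proof.
set B := U :|: [set tnth xs i].
have sBAU : B \subset A :|: U by rewrite subUset subsetUr sub1set inE mem_tset.
rewrite -(SA_marginal_pred HX (fun psi => (restr U psi == phi) &&
  (psi (tnth xs i) == Some a)) sBAU hAU) /= [RHS]big_mkcond.
rewrite /joint_mass (exchange_big_dep xpredT) //=; apply: eq_bigr => chi _.
rewrite restr_restr ?subsetUl // restrE !inE eqxx orbT.
have [->|/support_defined/exists_values_tuple[s0 vals_s0]] :=
  eqVneq (X (A :|: U) chi) 0; first by rewrite big1 ?if_same.
have /forallP/(_ i)/eqP -> : [forall j, chi (tnth xs j) == Some (tnth s0 j)].
  by rewrite vals_s0.
rewrite big_mkcond (bigD1 s0) //= vals_s0 eqxx andbT andbC.
rewrite big1 ?addr0 // => s s_s0.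
by rewrite vals_s0 (negPf s_s0) !andbF.
Qed.

Lemma sum_xlnx_joint_mass :
  \sum_phi \sum_s xlnx (joint_mass phi s) = - entropy X (A :|: U).
Proof.
rewrite pair_big /= /entropy opprK /joint_mass.
apply: (@sum_fun_fibres _ _ _
  (fun (ps : {ffun V -> option Sig} * k.-tuple Sig) chi => (restr U chi == ps.1)
     && [forall j, chi (tnth xs j) == Some (tnth ps.2 j)])
  (X (A :|: U)) _ (@xlnx0 R)).
- move=> [phi s] chi chi' /andP[/eqP rU /forallP vals].
  move=> /andP[/eqP rU' /forallP vals'].
  move=> /(SA_dom HX hAU) dchi /(SA_dom HX hAU) dchi'.
  apply: (eq_assign dchi dchi') => x; rewrite inE => /orP[|xU].
    by rewrite inE => /tnthP[j ->]; move: (vals j) (vals' j) => /eqP -> /eqP ->.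
  have := congr1 (fun psi => psi x) (etrans rU (esym rU')).
  by rewrite !restrE xU.
move=> chi /support_defined/exists_values_tuple[s0 vals_s0].
by exists (restr U chi, s0) => -[phi s]; rewrite /= vals_s0 xpair_eqE eq_sym.
Qed.

Lemma sum_xlnx_marg_mass i : \sum_phi \sum_a
    xlnx (\sum_(s | tnth s i == a) joint_mass phi s)
  = - entropy X (U :|: [set tnth xs i]).
Proof.
set B := U :|: [set tnth xs i].
have hB : (#|B| <= r)%N.
  apply: leq_trans (subset_leq_card _) hAU.
  by rewrite subUset subsetUr sub1set inE mem_tset.
under eq_bigr do under eq_bigr do rewrite marg_mass.
rewrite pair_big /= /entropy opprK.
apply: (@sum_fun_fibres _ _ _ (fun (pa : {ffun V -> option Sig} * Sig) psi =>
  (restr U psi == pa.1) && (psi (tnth xs i) == Some pa.2)) (X B) _ (@xlnx0 R)).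
- move=> [phi a] psi psi' /andP[/eqP rU /eqP val] /andP[/eqP rU' /eqP val'].
  move=> /(SA_dom HX hB) dpsi /(SA_dom HX hB) dpsi'.
  apply: (eq_assign dpsi dpsi') => x; rewrite inE => /orP[xU|].
    have := congr1 (fun chi => chi x) (etrans rU (esym rU')).
    by rewrite !restrE xU.
  by rewrite inE => /eqP ->; rewrite val val'.
move=> psi /(SA_dom HX hB) dpsi.
have : tnth xs i \in dom psi by rewrite dpsi !inE eqxx orbT.
rewrite in_dom; case val: (psi (tnth xs i)) => [a|] // _.
exists (restr U psi, a) => -[phi b].
by rewrite /= xpair_eqE (inj_eq Some_inj) [phi == _]eq_sym [b == _]eq_sym.
Qed.

Lemma sum_cond_totcorr :
  \sum_phi X U phi * totcorr (condition X U phi) xs = cond_corr (entropy X) U xs.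
Proof.
have sum_xlnxU : \sum_phi xlnx (X U phi) = - entropy X U.
  by rewrite /entropy opprK.
under eq_bigr do rewrite cond_totcorr.
rewrite !sumrB sum_xlnx_joint_mass sum_xlnxU exchange_big /=.
under eq_bigr do rewrite sumrB sum_xlnx_marg_mass sum_xlnxU.
rewrite /cond_corr big_tuple.
have -> : \sum_i (entropy X (U :|: [set tnth xs i]) - entropy X U) =
    - \sum_i (- entropy X (U :|: [set tnth xs i]) - - entropy X U).
  by rewrite -sumrN; apply: eq_bigr => i _; lra.
lra.
Qed.

End ConditionedTotalCorrelation.

Section EntropyPotential.
Variables (R : realType) (V Sig : finType) (r : nat).
Variable X : {set V} -> assign V Sig -> R.
Hypothesis HX : SA_solution r X.
Local Notation H := (entropy X).
Local Notation n := (#|V|%:R : R).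
Local Notation L := (ln #|Sig|%:R : R).
Implicit Types (C : {set V}) (a b : V).

Lemma cond_mutinf_ge0 a b C :
  (#|C :|: [set a] :|: [set b]| <= r)%N -> 0 <= cond_mutinf H a b C.
Proof.
move=> hr; have := entropy_submod HX (subsetUl C [set a]) (subsetUl C [set b]).
rewrite setUACA setUid setUA => /(_ hr); rewrite /cond_mutinf; lra.
Qed.

Lemma cond_corr_ge0 (s : seq V) C :
  (#|[set x in s] :|: C| <= r)%N -> 0 <= cond_corr H C s.
Proof.
elim: s C => [|x s IHs] C hr; first by rewrite cond_corr_nil.
have sub_hr (B : {set V}) : B \subset [set z in x :: s] :|: C -> (#|B| <= r)%N.
  by move=> sB; apply: leq_trans (subset_leq_card sB) hr.
rewrite cond_corr_cons addr_ge0 //.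
  apply/IHs/sub_hr/subsetP => z; rewrite !inE.
  by case: (z == x); case: (z \in s); case: (z \in C).
rewrite big_seq sumr_ge0 // => y ys; apply/cond_mutinf_ge0/sub_hr/subsetP => z.
by rewrite !inE => /orP[/orP[->|/eqP->]|/eqP->]; rewrite ?eqxx ?ys ?orbT.
Qed.

Lemma gain_bounds C : (#|C| < r)%N -> 0 <= gain H C <= n * L.
Proof.
move=> hC; have hCa a : (#|C :|: [set a]| <= r)%N.
  by apply: leq_trans hC; rewrite setUC cardsU1 -add1n leq_add2r leq_b1.
apply/andP; split.
  by apply: sumr_ge0 => a _; rewrite subr_ge0 (entropy_mono HX) ?subsetUl.
apply: le_trans (ler_sum _ (fun a _ => entropy_setU1_le HX (hCa a))) _.
by rewrite sumr_const mulr_natl.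
Qed.

Hypothesis V_gt0 : (0 < #|V|)%N.

Lemma avg_gain_bounds s : (s < r)%N -> 0 <= avg_gain H s <= L.
Proof.
move=> hs; have n_gt0 : 0 < n by rewrite ltr0n.
have hT (T : s.-tuple V) := leq_ltn_trans (card_tset T) hs.
have /andP[sum_ge0 sum_le] : 0 <= sum_tsets s (gain H) <= n ^+ s * (n * L).
  rewrite -sum_tuple_const; apply/andP; split.
    by apply: sumr_ge0 => T _; case/andP: (gain_bounds (hT T)).
  by apply: ler_sum => T _; case/andP: (gain_bounds (hT T)).
rewrite /avg_gain divr_ge0 ?exprn_ge0 ?ler0n //= ler_pdivrMr ?exprn_gt0 //.
by rewrite (_ : L * _ = n ^+ s * (n * L)) // exprS; ring.
Qed.

Lemma sum_avg_corr_le m s l : (s + m + l <= r)%N ->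
  \sum_(t < l) avg_corr H (s + t) m <= (m ^ 2)%:R * L.
Proof.
elim: m s => [|m IHm] s hr.
  by rewrite big1 ?mul0r // => t _; rewrite avg_corr0.
under eq_bigr do rewrite avg_corrS // -addSn.
rewrite big_split /= -mulr_sumr.
have telescope : \sum_(t < l) (avg_gain H (s + t) - avg_gain H (s.+1 + t)) =
    avg_gain H s - avg_gain H (s + l).
  have := telescope_sumr (fun t => avg_gain H (s + t)) (leq0n l).
  rewrite big_mkord addn0 => telescope; rewrite -opprB -telescope -sumrN.
  by apply: eq_bigr => t _; rewrite addnS addSn opprB.
have [s_lt_r sl_lt_r] : (s < r)%N /\ (s + l < r)%N by split; lia.
have /andP[_ gain_s_le] := avg_gain_bounds s_lt_r.
have /andP[gain_sl_ge0 _] := avg_gain_bounds sl_lt_r.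
have IH : \sum_(t < l) avg_corr H (s.+1 + t) m <= (m ^ 2)%:R * L.
  by apply: IHm; lia.
have L_ge0 := ln_nat_ge0 R #|Sig|.
have : m%:R * (avg_gain H s - avg_gain H (s + l)) <= m%:R * L.
  by apply: ler_wpM2l; [exact: ler0n | lra].
have mL_ge0 : 0 <= m%:R * L by rewrite mulr_ge0.
have -> : (m.+1 ^ 2)%:R * L = (m ^ 2)%:R * L + 2 * (m%:R * L) + L :> R.
  by rewrite !natrX -natr1; ring.
rewrite telescope; lra.
Qed.

End EntropyPotential.

Section ExpectedCorrelation.
Variables (R : realType) (V Sig : finType) (r k : nat).
Variable X : {set V} -> assign V Sig -> R.
Hypothesis HX : SA_solution r X.
Variable W : k.-tuple V -> R.
Local Notation n := (#|V|%:R : R).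

Lemma card_tsetU t (T : t.-tuple V) (S : k.-tuple V) :
  (#|[set x in S] :|: [set x in T]| <= k + t)%N.
Proof. by rewrite cardsU (leq_trans (leq_subr _ _)) // leq_add ?card_tset. Qed.

Lemma expCondE t : (t + k <= r)%N ->
  expCond W X t = (n ^+ t)^-1 * \sum_(T : t.-tuple V)
    \sum_(S : k.-tuple V) W S * cond_corr (entropy X) [set x in T] S.
Proof.
move=> htk; rewrite /expCond; congr (_ * _); apply: eq_bigr => T _.
rewrite /Ccorr; under eq_bigr do rewrite mulr_sumr.
rewrite exchange_big /=; apply: eq_bigr => S _.
have hST : (#|[set x in S] :|: [set x in T]| <= r)%N.
  by rewrite (leq_trans (card_tsetU T S)) // addnC.
rewrite -(sum_cond_totcorr HX hST) mulr_sumr; apply: eq_bigr => phi _.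
by rewrite mulrCA.
Qed.

Lemma expCond_le t Delta : (t + k <= r)%N -> 0 < Delta ->
  (forall S, 0 <= W S) -> dense Delta W ->
  expCond W X t <= avg_corr (entropy X) t k / Delta.
Proof.
move=> htk Delta_gt0 W_ge0 dense_W.
have W_le S : W S <= (n ^+ k)^-1 / Delta.
  by rewrite ler_pdivlMr // mulrC -div1r dense_W.
have corr_ge0 (T : t.-tuple V) (S : k.-tuple V) :
    0 <= cond_corr (entropy X) [set x in T] S.
  by apply: (cond_corr_ge0 HX); rewrite (leq_trans (card_tsetU T S)) // addnC.
have -> : avg_corr (entropy X) t k / Delta = (n ^+ t)^-1 * \sum_(T : t.-tuple V)
    \sum_(S : k.-tuple V) (n ^+ k)^-1 / Delta
      * cond_corr (entropy X) [set x in T] S.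
  rewrite /avg_corr /sum_tsets /corr_sum exprD invfM.
  under [Z in _ = _ * Z]eq_bigr do rewrite -mulr_sumr.
  by rewrite -mulr_sumr; ring.
rewrite expCondE // ler_wpM2l ?invr_ge0 ?exprn_ge0 //.
by apply: ler_sum => T _; apply: ler_sum => S _; apply: ler_wpM2r.
Qed.

End ExpectedCorrelation.

Lemma card_gt0_of_sum1 (R : realType) (V : finType) k (W : k.-tuple V -> R) :
  (0 < k)%N -> \sum_S W S = 1 -> (0 < #|V|)%N.
Proof.
move=> k_gt0 W_sum1; apply/card_gt0P.
have [S _|no_tuple] := pickP (@predT (k.-tuple V)).
  by exists (tnth S (Ordinal k_gt0)).
move: W_sum1; rewrite (eq_bigl _ _ no_tuple) big_pred0_eq => /eqP.
by rewrite eq_sym oner_eq0.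
Qed.

Lemma exists_le_avg (R : realType) l (f : nat -> R) (B : R) : (0 < l)%N ->
  \sum_(t < l) f t <= B -> exists2 t, (t < l)%N & f t <= B / l%:R.
Proof.
move=> l_gt0 sum_le.
have [t f_le|f_gt] := pickP (fun t : 'I_l => f t <= B / l%:R); first by exists t.
have : \sum_(t < l) B / l%:R < \sum_(t < l) f t.
  apply: ltr_sum => [|t _]; last by rewrite ltNge f_gt.
  by apply/hasP; exists (Ordinal l_gt0); rewrite ?mem_index_enum.
rewrite sumr_const card_ord -(mulr_natr (B / l%:R)) divfK ?pnatr_eq0 -?lt0n //.
by rewrite ltNge sum_le.
Qed.

Theorem lemma5p1 (R : realType) (V Sig : finType) (k r q : nat) (Delta : R)
  (W : k.-tuple V -> R) (P : k.-tuple V -> k.-tuple Sig -> R)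
  (X : {set V} -> assign V Sig -> R) :
  #|Sig| = q ->
  (forall S, 0 <= W S) -> \sum_S W S = 1 ->
  (forall S s, 0 <= P S s <= 1) ->
  0 < Delta -> dense Delta W ->
  SA_solution r X ->
  forall l : nat, (0 < l)%N -> (l <= r - k)%N ->
  exists t : nat, (t <= l)%N /\
    expCond W X t <= (k ^ 2)%:R * ln (q%:R) / (l%:R * Delta).
Proof.
move=> <- W_ge0 W_sum1 _ Delta_gt0 dense_W HX l l_gt0 l_le.
have sum_le : \sum_(t < l) expCond W X t <= (k ^ 2)%:R * ln #|Sig|%:R / Delta.
  apply: le_trans (_ : \sum_(t < l) avg_corr (entropy X) (0 + t) k / Delta <= _).
    apply: ler_sum => t _; apply: (expCond_le HX) => //.
    by have := ltn_ord t; lia.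
  rewrite -mulr_suml ler_pM2r ?invr_gt0 //.
  have [-> | k_gt0] := posnP k.
    by rewrite big1 ?exp0n ?mul0r // => t _; rewrite avg_corr0.
  by apply: (sum_avg_corr_le HX (card_gt0_of_sum1 k_gt0 W_sum1)); lia.
have [t t_lt_l t_le] := exists_le_avg l_gt0 sum_le.
by exists t; rewrite ltnW // invfM mulrA mulrAC.
Qed.
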